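(* Let $s\in GL(\infty,F_2)$ be the permutation matrix exchanging the basis vectors $e_1$ and $e_2$ and fixing all $e_j$, $j\ge3$. For every $g\in GL(\infty,F_2)\setminus\{I\}$ there exist $k\in\mathbb N$ and $s_1,\dots,s_k\in GL(\infty,F_2)$ such that each $s_i$ is conjugate to $s$ in $GL(\infty,F_2)$, $s_1s_2\cdots s_k=g$, and $$R(s_1-I)+R(s_2-I)+\dots+R(s_k-I)=R(g-I),$$ where $R(h-I)\subseteq F_2^\infty$ denotes the range of $h-I$.
   Context: $F_2$ is the field with two elements and $F_2^\infty=\bigoplus_{\mathbb N}F_2$ is the space of finitely supported column vectors with standard basis $e_1,e_2,\dots$. $GL(\infty,F_2)$ is the group of invertible $\mathbb N\times\mathbb N$ matrices $M$ over $F_2$ with $M_{ij}\neq\delta_{ij}$ for only finitely many $(i,j)$, acting on $F_2^\infty$ by matrix multiplication; $I$ is the identity matrix. *)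

(* GL(infinity, F_2) with 0-based indices: e_0, e_1, ... *)
From mathcomp Require Import all_boot all_algebra.
Set Implicit Arguments. Unset Strict Implicit. Unset Printing Implicit Defensive.
Import GRing.Theory.
Local Open Scope ring_scope.

Definition mat := nat -> nat -> 'F_2.
Definition vec := nat -> 'F_2.

Definition idm : mat := fun i j => (i == j)%:R.

(* finitely supported vectors (elements of F_2^infinity) *)
Definition finsupp (v : vec) : Prop := exists N, forall i, (N <= i)%N -> v i = 0.

Definition finitary (M : mat) : Prop :=
  exists s : seq (nat * nat), forall i j, M i j != idm i j -> (i, j) \in s.

Definition series_sum (f : nat -> 'F_2) (x : 'F_2) : Prop :=
  exists n0, forall n, (n0 <= n)%N -> \sum_(k < n) f k = x.

Definition is_mul (M N P : mat) : Prop :=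
  forall i j, series_sum (fun k => M i k * N k j) (P i j).

Definition mat_eq (M N : mat) : Prop := forall i j, M i j = N i j.

Definition GLinf (M : mat) : Prop :=
  finitary M /\
  exists Minv, finitary Minv /\ is_mul M Minv idm /\ is_mul Minv M idm.

Definition conj_GL (s t : mat) : Prop :=
  exists h hinv u, GLinf h /\ is_mul h hinv idm /\ is_mul hinv h idm /\
    is_mul h s u /\ is_mul u hinv t.

Fixpoint is_prod (l : seq mat) (P : mat) : Prop :=
  match l with
  | [::] => mat_eq P idm
  | M :: l' => exists Q, is_prod l' Q /\ is_mul M Q P
  end.

Definition in_range_sub_I (h : mat) (w : vec) : Prop :=
  exists v, finsupp v /\
    forall i, series_sum (fun k => (h i k - idm i k) * v k) (w i).

Fixpoint in_sum_ranges (l : seq mat) (w : vec) : Prop :=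
  match l with
  | [::] => forall i, w i = 0
  | M :: l' => exists u v, in_range_sub_I M u /\ in_sum_ranges l' v /\
                 forall i, w i = u i + v i
  end.

(* permutation matrix exchanging e_0 and e_1 (the paper's e_1, e_2) *)
Definition swap01 (i : nat) : nat :=
  match i with 0 => 1 | 1 => 0 | _ => i end.
Definition smat : mat := fun i j => (swap01 j == i)%:R.

(* An element of GL(oo, F_2) is the identity outside a finite block, so it is an
   invertible (N+2) x (N+2) matrix A acting trivially on the coordinates >= N.
   If A moves e_j, put u = (A - 1) e_j; invertibility yields a linear form f with
   f(e_j) = 1, f(u) = 0, vanishing on the basis vectors fixed by A.  The transvection
   t = 1 + u f^T is an involution, t A fixes e_j and all basis vectors fixed by A,
   and R(t - 1) = F_2 u lies in R(A - 1), whence R(A - 1) = R(t - 1) + R(t A - 1).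
   Induction on the number of moved basis vectors writes A as a product of such
   transvections.  Finally every transvection 1 + u f^T with u, f <> 0 supported
   on the first N coordinates is conjugate to s = 1 + (e_0 + e_1)(e_0 + e_1)^T:
   the two spare coordinates N, N+1 leave room to conjugate step by step. *)

From mathcomp Require Import all_boot all_algebra zify.
From Stdlib Require Import FunctionalExtensionality.
Set Implicit Arguments. Unset Strict Implicit. Unset Printing Implicit Defensive.
Import GRing.Theory.
Local Open Scope ring_scope.

Section RangeSub1.
Variables (R : pzRingType) (n : nat).
Local Notation M := 'M[R]_n.
Local Notation V := 'cV[R]_n.

Definition range_sub1 (A : M) (w : V) := exists v, w = (A - 1%:M) *m v.

Fixpoint sum_ranges_sub1 (As : seq M) (w : V) : Prop :=
  if As is A :: As' then
    exists x y, [/\ range_sub1 A x, sum_ranges_sub1 As' y & w = x + y]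
  else w = 0.

Lemma range_sub1D A x y : range_sub1 A x -> range_sub1 A y -> range_sub1 A (x + y).
Proof. by move=> [v ->] [v' ->]; exists (v + v'); rewrite mulmxDr. Qed.

Lemma range_sub1_mul (T B : M) : T *m T = 1%:M ->
    (forall x, range_sub1 T x -> range_sub1 (T *m B) x) ->
  forall w, range_sub1 (T *m B) w <->
    exists x y, [/\ range_sub1 T x, range_sub1 B y & w = x + y].
Proof.
move=> TT subT w; split.
  move=> [v ->]; exists ((T - 1%:M) *m (B *m v)), ((B - 1%:M) *m v).
  split; [by exists (B *m v) | by exists v |].
  by rewrite !mulmxBl !mul1mx mulmxA addrA subrK.
move=> [x [y [Tx [v ->] ->]]]; apply: range_sub1D; first exact: subT.
have -> : (B - 1%:M) *m v = (T - 1%:M) *m (T *m B *m v) + (T *m B - 1%:M) *m v.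
  by rewrite !mulmxBl !mul1mx !mulmxA TT mul1mx addrA subrK.
by apply: range_sub1D; [apply: subT; exists (T *m B *m v) | exists v].
Qed.

End RangeSub1.

(** * Transvections *)

Section Transvections.
Variables (R : comPzRingType) (n : nat).
Local Notation M := 'M[R]_n.
Local Notation V := 'cV[R]_n.

Definition dot (x y : V) : R := \sum_i x i 0 * y i 0.

Lemma dotC x y : dot x y = dot y x.
Proof. by apply: eq_bigr => i _; rewrite mulrC. Qed.

Lemma dotDl x y z : dot (x + y) z = dot x z + dot y z.
Proof. by rewrite /dot -big_split; apply: eq_bigr => i _; rewrite mxE mulrDl. Qed.

Lemma dotDr x y z : dot z (x + y) = dot z x + dot z y.
Proof. by rewrite dotC dotDl !(dotC z). Qed.

Lemma delta_colE (k i : 'I_n) : (delta_mx k 0 : V) i 0 = (i == k)%:R.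
Proof. by rewrite mxE andbT. Qed.

Lemma dot_deltal (k : 'I_n) v : dot (delta_mx k 0) v = v k 0.
Proof.
rewrite /dot (bigD1 k) //= big1 ?addr0 => [|i ik]; rewrite delta_colE ?eqxx ?mul1r //.
by rewrite (negbTE ik) mul0r.
Qed.

Lemma dot_deltar (k : 'I_n) v : dot v (delta_mx k 0) = v k 0.
Proof. by rewrite dotC dot_deltal. Qed.

Lemma trmx_mul_dot x y : x^T *m y = (dot x y)%:M.
Proof.
apply/matrixP => i j; rewrite [i]ord1 [j]ord1 !mxE /= mulr1n.
by apply: eq_bigr => k _; rewrite mxE.
Qed.

Definition tv (x y : V) : M := 1%:M + x *m y^T.

Lemma tvE x y i j : tv x y i j = (i == j)%:R + x i 0 * y j 0.
Proof. by rewrite !mxE big_ord1 mxE. Qed.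

Lemma tv_mulmx x y z : tv x y *m z = z + dot y z *: x.
Proof. by rewrite mulmxDl mul1mx -mulmxA trmx_mul_dot mul_mx_scalar. Qed.

Lemma trmx_tv x y : (tv x y)^T = tv y x.
Proof. by rewrite /tv linearD /= trmx1 trmx_mul trmxK. Qed.

Lemma tv_conj (H Hi : M) a b :
  H *m Hi = 1%:M -> H *m tv a b *m Hi = tv (H *m a) (Hi^T *m b).
Proof.
by move=> HHi; rewrite /tv mulmxDr mulmx1 mulmxDl HHi trmx_mul trmxK !mulmxA.
Qed.

Definition mx_conj (A T : M) :=
  exists H Hi, [/\ H *m Hi = 1%:M, Hi *m H = 1%:M & H *m A *m Hi = T].

Lemma mx_conj_refl A : mx_conj A A.
Proof. by exists 1%:M, 1%:M; rewrite mulmx1 mul1mx mulmx1. Qed.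

Lemma mx_conj_sym A T : mx_conj A T -> mx_conj T A.
Proof.
move=> [H [Hi [HHi HiH <-]]]; exists Hi, H; split=> //.
by rewrite !mulmxA HiH mul1mx -mulmxA HiH mulmx1.
Qed.

Lemma mx_conj_trans A B C : mx_conj A B -> mx_conj B C -> mx_conj A C.
Proof.
move=> [H [Hi [HHi HiH <-]]] [K [Ki [KKi KiK <-]]].
exists (K *m H), (Hi *m Ki); split; last by rewrite !mulmxA.
- by rewrite mulmxA -(mulmxA K) HHi mulmx1 KKi.
- by rewrite mulmxA -(mulmxA Hi) KiK mulmx1 HiH.
Qed.

End Transvections.

Lemma pchar_F2 : 2%N \in [pchar 'F_2]. Proof. exact: pchar_Fp. Qed.

Lemma F2_addrr (x : 'F_2) : x + x = 0. Proof. exact: addrr_pchar2 pchar_F2 x. Qed.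

Lemma F2mx_addrr m p (A : 'M['F_2]_(m, p)) : A + A = 0.
Proof. by apply/matrixP => i j; rewrite !mxE F2_addrr. Qed.

Lemma F2_cases (x : 'F_2) : x = 0 \/ x = 1.
Proof. by case: x => [[|[|k]] lt_k]; [left | right |]; try apply/val_inj. Qed.

Lemma F2_nonzero_entry m (v : 'cV['F_2]_m) : v != 0 -> exists i, v i 0 = 1.
Proof.
move/matrix0Pn => [i [j vi]]; exists i; move: vi; rewrite [j]ord1.
by case: (F2_cases (v i 0)) => ->; rewrite ?eqxx.
Qed.

Section F2Transvections.
Variable n : nat.
Local Notation M := 'M['F_2]_n.
Local Notation V := 'cV['F_2]_n.
Local Notation e k := (delta_mx k 0 : V).

Lemma tv_invol (x y : V) : dot y x = 0 -> tv x y *m tv x y = 1%:M.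
Proof.
move=> yx; rewrite {2}/tv mulmxDr mulmx1 mulmxA tv_mulmx yx scale0r addr0.
by rewrite /tv -addrA F2mx_addrr addr0.
Qed.

Lemma mx_conj_tv_step (A : M) a b x y : mx_conj A (tv a b) -> dot y x = 0 ->
  mx_conj A (tv (a + dot y a *: x) (b + dot x b *: y)).
Proof.
move=> Aab yx; apply: (mx_conj_trans Aab); exists (tv x y), (tv x y).
by rewrite tv_invol // tv_conj ?tv_invol // trmx_tv !tv_mulmx.
Qed.

Definition moved (A : M) := [set k | A *m e k != e k].

Lemma notin_moved (A : M) (k : 'I_n) : (k \notin moved A) = (A *m e k == e k).
Proof. by rewrite inE negbK. Qed.

Lemma notin_movedP (A : M) (k : 'I_n) :
  reflect (forall i, A i k = (i == k)%:R) (k \notin moved A).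
Proof.
rewrite notin_moved -colE; apply: (iffP eqP) => [Ak i | Ak].
  by rewrite -delta_colE -Ak mxE.
by apply/matrixP => i z; rewrite [z]ord1 mxE delta_colE Ak.
Qed.

Lemma moved_eq0 (A : M) : moved A = set0 -> A = 1%:M.
Proof.
move=> A0; apply/matrixP => i k; rewrite mxE.
by apply/notin_movedP; rewrite A0 inE.
Qed.

Lemma sub1_colE (A : M) (j i : 'I_n) : ((A - 1%:M) *m e j) i 0 = A i j + (i == j)%:R.
Proof. by rewrite -colE !mxE (GRing.subr_pchar2 pchar_F2). Qed.

Lemma unit_moved_column (A : M) (j : 'I_n) : A \in unitmx -> A j j = 0 ->
  exists m, [&& m != j, m \in moved A & A m j == 1].
Proof.
move=> Au Ajj; apply/existsP; apply: contraT => /existsPn none.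
have fixedA l : A l j = 1 -> forall i, A i l = (i == l)%:R.
  move=> Alj; apply/notin_movedP; move: (none l); rewrite Alj eqxx andbT.
  by apply: contraNN => ->; rewrite andbT; apply: contra_eq_neq Alj => ->; rewrite Ajj.
(* Otherwise A fixes its own column A e_j, and injectivity forces A e_j = e_j. *)
have : A *m col j A = A *m e j.
  apply/matrixP => i z; rewrite [z]ord1 -colE !mxE (bigD1 i) //= big1 => [|l /negbTE li].
    case: (F2_cases (A i j)) => Aij; rewrite mxE Aij ?mulr0 ?addr0 //.
    by rewrite fixedA // eqxx mulr1.
  by case: (F2_cases (A l j)) => Alj; rewrite mxE Alj ?mulr0 // fixedA // eq_sym li mul0r.
move/(can_inj (mulKmx Au))/matrixP/(_ j 0).
by rewrite !mxE Ajj eqxx => /eqP; rewrite eq_sym oner_eq0.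
Qed.

Lemma exists_annihilator (A : M) (j : 'I_n) : A \in unitmx -> j \in moved A ->
  exists f : V, [/\ f j 0 = 1, dot f ((A - 1%:M) *m e j) = 0 &
                  forall k, k \notin moved A -> f k 0 = 0].
Proof.
move=> Au jA; have kj k : k \notin moved A -> (k == j) = false.
  by apply: contraNF => /eqP ->.
case: (F2_cases (A j j)) => Ajj.
  have [m /and3P [mj mA /eqP Amj]] := unit_moved_column Au Ajj.
  have km k : k \notin moved A -> (k == m) = false by apply: contraNF => /eqP ->.
  exists (e j + e m); split.
  - by rewrite mxE !delta_colE eqxx eq_sym (negbTE mj) addr0.
  - by rewrite dotDl !dot_deltal !sub1_colE Ajj Amj eqxx (negbTE mj) add0r addr0 F2_addrr.
  - by move=> k kA; rewrite mxE !delta_colE kj ?km // addr0.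
exists (e j); split.
- by rewrite delta_colE eqxx.
- by rewrite dot_deltal sub1_colE Ajj eqxx F2_addrr.
- by move=> k kA; rewrite delta_colE kj.
Qed.

Lemma moved_tv_mulmx (A : M) (j : 'I_n) (f : V) : f j 0 = 1 ->
    dot f ((A - 1%:M) *m e j) = 0 -> (forall k, k \notin moved A -> f k 0 = 0) ->
  moved (tv ((A - 1%:M) *m e j) f *m A) \subset moved A :\ j.
Proof.
set u := (A - 1%:M) *m e j => fj fu f0.
apply/subsetP => k; apply: contraTT; rewrite in_setD1 negb_and negbK.
move=> /orP [/eqP -> | kA]; rewrite notin_moved -mulmxA tv_mulmx.
  have -> : A *m e j = e j + u by rewrite /u mulmxBl mul1mx addrC subrK.
  by rewrite dotDr dot_deltar fj fu addr0 scale1r -addrA F2mx_addrr addr0.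
by move: (kA); rewrite notin_moved => /eqP ->; rewrite dot_deltar f0 // scale0r addr0.
Qed.

End F2Transvections.

(** * Finitary matrices as embedded blocks *)

Lemma series_sum_unique F x y : series_sum F x -> series_sum F y -> x = y.
Proof.
move=> [m Fx] [p Fy]; rewrite -(Fx (maxn m p)) ?leq_maxl //.
by rewrite Fy // leq_maxr.
Qed.

Lemma series_sum_big F m :
  (forall k, (m <= k)%N -> F k = 0) -> series_sum F (\sum_(k < m) F k).
Proof.
move=> F0; exists m => p mp; rewrite -(subnKC mp).
elim: (p - m)%N => [|d IHd]; first by rewrite addn0.
by rewrite addnS big_ord_recr /= IHd F0 ?addr0 // leq_addr.
Qed.

Lemma series_sum0 F : (forall k, F k = 0) -> series_sum F 0.
Proof. by move=> F0; have := @series_sum_big F 0; rewrite big_ord0; apply. Qed.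

Lemma eq_series_sum F G x : F =1 G -> series_sum F x -> series_sum G x.
Proof.
by move=> FG [m Fx]; exists m => p mp; rewrite -(Fx p mp); apply: eq_bigr => k _.
Qed.

Lemma series_sum_single F i : (forall k, k != i -> F k = 0) -> series_sum F (F i).
Proof.
move=> F0; have := @series_sum_big F i.+1.
rewrite big_ord_recr /= big1 => [|k _]; last by rewrite F0 // ltn_eqF.
by rewrite add0r; apply=> k ik; rewrite F0 // gtn_eqF.
Qed.

Definition id_beyond (N : nat) (g : mat) :=
  forall i j, (N <= i)%N || (N <= j)%N -> g i j = idm i j.

Lemma id_beyond_le N1 N2 g : (N1 <= N2)%N -> id_beyond N1 g -> id_beyond N2 g.
Proof.
by move=> le12 g1 i j ij; apply: g1; case/orP: ij => /(leq_trans le12) ->; rewrite ?orbT.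
Qed.

Lemma id_beyond_finitary N g : id_beyond N g -> finitary g.
Proof.
move=> gN; exists [seq (i, j) | i <- iota 0 N, j <- iota 0 N] => i j.
have [/andP [iN jN] _ | ] := boolP ((i < N) && (j < N))%N.
  by apply: allpairs_f; rewrite mem_iota.
by rewrite negb_and -!leqNgt => /gN ->; rewrite eqxx.
Qed.

Lemma finitary_id_beyond g : finitary g -> exists N, id_beyond N g.
Proof.
case=> s gs; exists (\max_(p <- s) (maxn p.1 p.2).+1) => i j.
apply: contraTeq => /gs ijs.
have := leq_bigmax_seq (F := fun p : nat * nat => (maxn p.1 p.2).+1)
  (P := xpredT) _ ijs isT.
by rewrite /= negb_or -!ltnNge; lia.
Qed.

Section Embedding.
Variable n : nat.
Local Notation M := 'M['F_2]_n.
Local Notation V := 'cV['F_2]_n.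

Definition embed_mx (A : M) : mat := fun i j =>
  if (insub i, insub j) is (Some i', Some j') then A i' j' else idm i j.

Definition vec_of_col (x : V) : vec := fun i =>
  if insub i is Some i' then x i' 0 else 0.

Lemma embed_mxE (A : M) (i j : 'I_n) : embed_mx A i j = A i j.
Proof. by rewrite /embed_mx !valK. Qed.

Lemma id_beyond_embed (A : M) : id_beyond n (embed_mx A).
Proof.
move=> i j; rewrite /embed_mx => /orP [ni | nj]; first by rewrite insubF // ltnNge ni.
by case: (insub i) => // i'; rewrite insubF // ltnNge nj.
Qed.

Lemma vec_of_colE (x : V) (i : 'I_n) : vec_of_col x i = x i 0.
Proof. by rewrite /vec_of_col valK. Qed.

Lemma vec_of_col_out (x : V) i : (n <= i)%N -> vec_of_col x i = 0.
Proof. by move=> ni; rewrite /vec_of_col insubF // ltnNge ni. Qed.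

Lemma vec_of_col0 i : vec_of_col 0 i = 0.
Proof. by rewrite /vec_of_col; case: insub => // i'; rewrite mxE. Qed.

Lemma vec_of_colD (x y : V) i : vec_of_col (x + y) i = vec_of_col x i + vec_of_col y i.
Proof. by rewrite /vec_of_col; case: insub => [i'|]; rewrite ?mxE ?addr0. Qed.

Lemma is_mul_embed (A C : M) : is_mul (embed_mx A) (embed_mx C) (embed_mx (A *m C)).
Proof.
move=> i j; have [ni | ltin] := leqP n i.
  have -> : embed_mx (A *m C) i j = embed_mx A i i * embed_mx C i j.
    by rewrite !id_beyond_embed ?ni // /idm eqxx mul1r.
  apply: series_sum_single => k ki.
  by rewrite id_beyond_embed ?ni // /idm eq_sym (negbTE ki) mul0r.
have [nj | ltjn] := leqP n j.
  have -> : embed_mx (A *m C) i j = embed_mx A i j * embed_mx C j j.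
    by rewrite !id_beyond_embed ?nj ?orbT // /idm eqxx mulr1.
  apply: series_sum_single => k kj.
  by rewrite (id_beyond_embed C) ?nj ?orbT // /idm (negbTE kj) mulr0.
have -> : embed_mx (A *m C) i j = \sum_(k < n) embed_mx A i k * embed_mx C k j.
  rewrite (embed_mxE _ (Ordinal ltin) (Ordinal ltjn)) mxE; apply: eq_bigr => k _.
  by rewrite (embed_mxE A (Ordinal ltin) k) (embed_mxE C k (Ordinal ltjn)).
apply: series_sum_big => k nk.
by rewrite id_beyond_embed ?nk ?orbT // /idm ltn_eqF ?mul0r // (leq_trans ltin).
Qed.

Lemma eq_embed_mx (A : M) g :
  id_beyond n g -> (forall i j : 'I_n, A i j = g i j) -> embed_mx A = g.
Proof.
move=> gn Ag; apply: functional_extensionality => i; apply: functional_extensionality => j.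
have [/andP [ltin ltjn] | ] := boolP ((i < n) && (j < n))%N.
  by rewrite (embed_mxE _ (Ordinal ltin) (Ordinal ltjn)) Ag.
by rewrite negb_and -!leqNgt => nij; rewrite id_beyond_embed // gn.
Qed.

Lemma embed_mx1 : embed_mx 1%:M = idm.
Proof. by apply: eq_embed_mx => [i j ij | i j]; rewrite ?mxE. Qed.

Lemma embed_block g : id_beyond n g -> g = embed_mx (\matrix_(i, j) g i j).
Proof. by move=> gn; rewrite (eq_embed_mx gn) // => i j; rewrite mxE. Qed.

Lemma is_mul_embed_idm (A B : M) : A *m B = 1%:M -> is_mul (embed_mx A) (embed_mx B) idm.
Proof. by move=> AB i j; rewrite -embed_mx1 -AB; apply: is_mul_embed. Qed.

Lemma is_mul_embed_idmP (A B : M) : is_mul (embed_mx A) (embed_mx B) idm -> A *m B = 1%:M.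
Proof.
move=> AB; apply/matrixP => i j; rewrite -embed_mxE -(embed_mxE 1%:M) embed_mx1.
exact: series_sum_unique (is_mul_embed A B i j) (AB i j).
Qed.

Lemma GLinf_embed (A B : M) : A *m B = 1%:M -> B *m A = 1%:M -> GLinf (embed_mx A).
Proof.
move=> AB BA; split; first exact/id_beyond_finitary/id_beyond_embed.
exists (embed_mx B); split; first exact/id_beyond_finitary/id_beyond_embed.
by split; apply: is_mul_embed_idm.
Qed.

Lemma conj_GL_embed (A T : M) : mx_conj A T -> conj_GL (embed_mx A) (embed_mx T).
Proof.
move=> [H [Hi [HHi HiH <-]]]; exists (embed_mx H), (embed_mx Hi), (embed_mx (H *m A)).
split; first exact: GLinf_embed HHi HiH.
by do !split; apply: is_mul_embed_idm || apply: is_mul_embed.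
Qed.

Lemma is_prod_embed (Ts : seq M) :
  is_prod (map embed_mx Ts) (embed_mx (foldr mulmx 1%:M Ts)).
Proof.
elim: Ts => [|A Ts IH] /=; first by rewrite embed_mx1.
by exists (embed_mx (foldr mulmx 1%:M Ts)); split=> //; apply: is_mul_embed.
Qed.

Lemma series_embed_mulmx (A : M) (z : V) i :
  series_sum (fun k => (embed_mx A i k - idm i k) * vec_of_col z k)
             (vec_of_col ((A - 1%:M) *m z) i).
Proof.
have [ni | ltin] := leqP n i.
  rewrite vec_of_col_out //; apply: series_sum0 => k.
  by rewrite id_beyond_embed ?ni // subrr mul0r.
have -> : vec_of_col ((A - 1%:M) *m z) i =
          \sum_(k < n) (embed_mx A i k - idm i k) * vec_of_col z k.
  rewrite (vec_of_colE _ (Ordinal ltin)) mxE; apply: eq_bigr => k _.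
  by rewrite (embed_mxE A (Ordinal ltin) k) vec_of_colE !mxE.
by apply: series_sum_big => k nk; rewrite vec_of_col_out ?mulr0.
Qed.

Lemma in_range_embed (A : M) (w : vec) : in_range_sub_I (embed_mx A) w <->
  exists x, range_sub1 A x /\ w =1 vec_of_col x.
Proof.
split=> [[v [_ Av]] | [x [[z ->] wx]]].
  exists ((A - 1%:M) *m \col_k v k); split; first by exists (\col_k v k).
  move=> i; apply: series_sum_unique (Av i) _.
  apply: eq_series_sum (series_embed_mulmx A _ i) => k.
  have [nk | ltkn] := leqP n k; first by rewrite id_beyond_embed ?nk ?orbT // subrr !mul0r.
  by rewrite (vec_of_colE _ (Ordinal ltkn)) mxE.
exists (vec_of_col z); split; first by exists n => i; apply: vec_of_col_out.
by move=> i; rewrite wx; apply: series_embed_mulmx.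
Qed.

Lemma in_sum_ranges_embed (Ts : seq M) (w : vec) : in_sum_ranges (map embed_mx Ts) w <->
  exists x, sum_ranges_sub1 Ts x /\ w =1 vec_of_col x.
Proof.
elim: Ts w => [|A Ts IH] w /=.
  split=> [w0 | [x [-> wx]] i]; last by rewrite wx vec_of_col0.
  by exists 0; split=> // i; rewrite w0 vec_of_col0.
split=> [[u [v [/in_range_embed [x [Ax ux]] [/IH [y [Tsy vy]] wuv]]]] |
         [z [[x [y [Ax Tsy ->]]] wz]]].
  by exists (x + y); split; [exists x, y | move=> i; rewrite wuv ux vy vec_of_colD].
exists (vec_of_col x), (vec_of_col y); split; first by apply/in_range_embed; exists x.
by split; [apply/IH; exists y | move=> i; rewrite wz vec_of_colD].
Qed.

End Embedding.

Lemma smatE i j : smat i j = idm i j + ((i < 2) && (j < 2))%N%:R.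
Proof.
rewrite /smat /idm.
by case: i => [|[|i]]; case: j => [|[|j]] /=; rewrite ?addr0 ?add0r ?F2_addrr // eq_sym.
Qed.

(** * Transvections supported on the first N coordinates *)

Section TailBlock.
Variable N : nat.
Local Notation n := N.+2.
Local Notation M := 'M['F_2]_n.
Local Notation V := 'cV['F_2]_n.
Local Notation e k := (delta_mx k 0 : V).

Definition zero_tail (v : V) := forall i : 'I_n, (N <= i)%N -> v i 0 = 0.

Definition head_tv_pair (u f : V) :=
  [/\ zero_tail u, zero_tail f, dot f u = 0, u != 0 & f != 0].

Definition spare1 : 'I_n := Ordinal (leqW (leqnn N.+1)).
Definition spare2 : 'I_n := ord_max.

Lemma zero_tail_entry1 v (q : 'I_n) : zero_tail v -> v q 0 = 1 -> (q < N)%N.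
Proof. by move=> vt vq; rewrite ltnNge; apply/negP => /vt; rewrite vq => /eqP. Qed.

Lemma mx_conj_spare_tv u f :
  head_tv_pair u f -> mx_conj (tv (e spare1) (e spare2)) (tv u f).
Proof.
move=> [tu tf fu u0 f0].
have [q uq] := F2_nonzero_entry u0; have [p fp] := F2_nonzero_entry f0.
have qN := zero_tail_entry1 tu uq; have pN := zero_tail_entry1 tf fp.
have u1 : u spare1 0 = 0 by apply: tu.
have u2 : u spare2 0 = 0 by apply: tu; rewrite leqnSn.
have f2 : f spare2 0 = 0 by apply: tf; rewrite leqnSn.
have q1 : (q == spare1) = false by rewrite -val_eqE /= ltn_eqF.
have p2 : (p == spare2) = false by rewrite -val_eqE /= ltn_eqF // ltnW.
have s12 : (spare1 == spare2) = false by rewrite -val_eqE /= ltn_eqF.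
have s1 : mx_conj (tv (e spare1) (e spare2)) (tv (e spare1 + u) (e spare2)).
  move: (mx_conj_tv_step (mx_conj_refl (tv (e spare1) (e spare2)))
           (x := u) (y := e spare1) (etrans (dot_deltal _ _) u1)).
  by rewrite dot_deltal dot_deltar delta_colE eqxx u2 scale1r scale0r addr0.
have s2 : mx_conj (tv (e spare1) (e spare2)) (tv u (e spare2)).
  have qs1 : dot (e q) (e spare1) = 0 by rewrite dot_deltal delta_colE q1.
  move: (mx_conj_tv_step s1 qs1).
  rewrite dotDr !dot_deltal !delta_colE q1 uq s12 add0r scale1r scale0r addr0.
  by rewrite addrC addrA F2mx_addrr add0r.
have bp : dot (f + e spare2) (e spare2 + e p) = 0.
  by rewrite !(dotDl, dotDr, dot_deltal, dot_deltar) !delta_colE eqxx eq_sym p2 f2 fp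
    add0r addr0 F2_addrr.
move: (mx_conj_tv_step s2 bp).
rewrite !(dotDl, dotDr, dot_deltal, dot_deltar) !delta_colE eqxx p2 fu u2.
by rewrite addr0 scale0r addr0 addr0 scale1r addrC -addrA F2mx_addrr addr0.
Qed.

Definition e01 : V := e ord0 + e (inord 1).

Lemma e01E (i : 'I_n) : e01 i 0 = (i < 2)%N%:R.
Proof.
rewrite mxE !delta_colE -!val_eqE /= inordK //.
by case: i => [[|[|i]] lt_i] /=; rewrite ?addr0 ?add0r.
Qed.

Lemma head_tv_pair_e01 : (2 <= N)%N -> head_tv_pair e01 e01.
Proof.
move=> N2; have e01_0 : e01 ord0 0 = 1 by rewrite e01E.
split.
- by move=> i Ni; rewrite e01E ltnNge (leq_trans N2 Ni).
- by move=> i Ni; rewrite e01E ltnNge (leq_trans N2 Ni).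
- rewrite !(dotDl, dotDr, dot_deltal) !delta_colE -!val_eqE /= inordK //.
  by rewrite /= addr0 add0r F2_addrr.
- by apply/eqP => /matrixP/(_ ord0 0); rewrite e01_0 mxE => /eqP.
- by apply/eqP => /matrixP/(_ ord0 0); rewrite e01_0 mxE => /eqP.
Qed.

Lemma mx_conj_e01 u f : (2 <= N)%N -> head_tv_pair u f -> mx_conj (tv e01 e01) (tv u f).
Proof.
move=> N2 uf; apply: mx_conj_trans (mx_conj_spare_tv uf).
exact/mx_conj_sym/mx_conj_spare_tv/head_tv_pair_e01.
Qed.

Definition fixes_tail (A : M) :=
  forall i j : 'I_n, (N <= i)%N || (N <= j)%N -> A i j = (i == j)%:R.

Lemma tail_notin_moved (A : M) (k : 'I_n) : fixes_tail A -> (N <= k)%N -> k \notin moved A.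
Proof. by move=> tA Nk; apply/notin_movedP => i; apply: tA; rewrite Nk orbT. Qed.

Lemma fixes_tail_tv_mulmx (A : M) (u f : V) :
  fixes_tail A -> zero_tail u -> zero_tail f -> fixes_tail (tv u f *m A).
Proof.
move=> tA tu tf i k /orP [Ni | Nk].
  rewrite mulmxDl mul1mx mxE -mulmxA mxE big_ord1 tu // mul0r addr0.
  by apply: tA; rewrite Ni.
apply/notin_movedP; move: (tail_notin_moved tA Nk).
by rewrite !notin_moved -mulmxA => /eqP ->; rewrite tv_mulmx dot_deltar tf // scale0r addr0.
Qed.

Lemma moved_reduction (A : M) (j : 'I_n) :
    A \in unitmx -> fixes_tail A -> j \in moved A ->
  exists u f, [/\ head_tv_pair u f, fixes_tail (tv u f *m A),
    moved (tv u f *m A) \subset moved A :\ j &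
    forall x, range_sub1 (tv u f) x -> range_sub1 A x].
Proof.
move=> Au tA jA; have [f [fj fu f0]] := exists_annihilator Au jA.
set u := (A - 1%:M) *m e j in fu *.
have tu : zero_tail u by move=> i Ni; rewrite sub1_colE tA ?Ni // F2_addrr.
have tf : zero_tail f by move=> k Nk; apply/f0/tail_notin_moved.
exists u, f; split.
- split=> //; first by rewrite /u mulmxBl mul1mx subr_eq0 -notin_moved negbK.
  by apply/eqP => /matrixP/(_ j 0); rewrite fj mxE => /eqP; rewrite oner_eq0.
- exact: fixes_tail_tv_mulmx.
- exact: moved_tv_mulmx.
move=> x [z ->]; exists (e j *m (f^T *m z)).
by rewrite /tv addrAC subrr add0r !mulmxA.
Qed.

Lemma tv_decomposition (A : M) : A \in unitmx -> fixes_tail A ->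
  exists Ts : seq M,
    [/\ forall T, T \in Ts -> exists u f, head_tv_pair u f /\ T = tv u f,
       A = foldr mulmx 1%:M Ts &
       forall w, sum_ranges_sub1 Ts w <-> range_sub1 A w].
Proof.
have [m] := ubnP #|moved A|; elim: m A => // m IH A ltAm Au tA.
have [moved0 | [j jA]] := set_0Vmem (moved A).
  exists [::]; rewrite (moved_eq0 moved0) /range_sub1 subrr; split=> // w.
  by split=> [-> | [v ->]]; [exists 0; rewrite mulmx0 | rewrite mul0mx].
have [u [f [uf tB movedB rangeT]]] := moved_reduction Au tA jA.
set T := tv u f in tB movedB rangeT; set B := T *m A in tB movedB.
have TT : T *m T = 1%:M by case: uf => _ _ fu _ _; apply: tv_invol.
have defA : A = T *m B by rewrite /B mulmxA TT mul1mx.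
have Bu : B \in unitmx.
  by rewrite unitmx_mul Au andbT; case: (mulmx1_unit TT).
have ltBm : (#|moved B| < m)%N.
  apply: leq_ltn_trans (subset_leq_card movedB) _.
  by rewrite (cardsD1 j) jA add1n ltnS in ltAm.
have [Ts [TsP defB rangeB]] := IH B ltBm Bu tB.
exists (T :: Ts); split.
- by move=> T'; rewrite inE => /predU1P [-> | /TsP //]; exists u, f.
- by rewrite /= -defB.
move=> w; rewrite defA range_sub1_mul //; last by rewrite -defA.
by split=> [] [x [y [Tx /rangeB By ->]]]; exists x, y.
Qed.

Lemma embed_e01 : (2 <= N)%N -> embed_mx (tv e01 e01) = smat.
Proof.
move=> N2; apply: eq_embed_mx => [i j nij | i j]; rewrite smatE; last first.
  by rewrite tvE !e01E -natrM mulnb.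
suff -> : ((i < 2) && (j < 2))%N = false by rewrite addr0.
by apply/negbTE; rewrite negb_and -!leqNgt; case/orP: nij => nk; apply/orP; [left|right];
  apply: leq_trans nk.
Qed.

Lemma embed_tv_conj_smat u f : (2 <= N)%N -> head_tv_pair u f ->
  GLinf (embed_mx (tv u f)) /\ conj_GL smat (embed_mx (tv u f)).
Proof.
move=> N2 uf; have TT : tv u f *m tv u f = 1%:M by case: uf => _ _ fu _ _; apply: tv_invol.
split; first exact: (GLinf_embed TT TT).
by rewrite -embed_e01 //; apply/conj_GL_embed/mx_conj_e01.
Qed.

End TailBlock.

Theorem lemma4p5 (g : mat) :
  GLinf g -> ~ mat_eq g idm ->
  exists l : seq mat,
    (forall i, (i < size l)%N ->
       GLinf (nth idm l i) /\ conj_GL smat (nth idm l i)) /\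
    is_prod l g /\
    (forall w : vec, in_sum_ranges l w <-> in_range_sub_I g w).
Proof.
move=> [/finitary_id_beyond [N1 g1] [gi [/finitary_id_beyond [N2 gi1] [ggi gig]]]] _.
pose N := maxn 2 (maxn N1 N2).
have gN : id_beyond N g by apply: (id_beyond_le _ g1); lia.
have giN : id_beyond N gi by apply: (id_beyond_le _ gi1); lia.
have defg := embed_block (id_beyond_le (leqW (leqnSn N)) gN).
have defgi := embed_block (id_beyond_le (leqW (leqnSn N)) giN).
set G := \matrix_(i, j) g i j in defg; set Gi := \matrix_(i, j) gi i j in defgi.
have GGi : G *m Gi = 1%:M by apply: is_mul_embed_idmP; rewrite -defg -defgi.
have Gu : G \in unitmx by case: (mulmx1_unit GGi).
have tG : fixes_tail G by move=> i j ij; rewrite mxE gN.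
have [Ts [TsP defG rangeG]] := tv_decomposition Gu tG.
exists (map (@embed_mx _) Ts); split; [|split].
- move=> k; rewrite size_map => kTs; rewrite (nth_map 1%:M) //.
  have [u [f [uf ->]]] := TsP _ (mem_nth 1%:M kTs).
  by apply: embed_tv_conj_smat; rewrite // leq_maxl.
- by rewrite defg defG; apply: is_prod_embed.
move=> w; rewrite in_sum_ranges_embed defg in_range_embed.
by split=> [] [x [/rangeG Gx wx]]; exists x.
Qed.
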